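(* Let $q$ be an odd prime power, $\lambda$ a divisor of $q+1$ with $2\le\lambda<q+1$, $m=2t+1\ge5$, and $n=\frac{q^m+1}{\lambda}$. If $t$ is even, the smallest positive integer $i$ with $i\not\equiv0\pmod q$ that is not a coset leader modulo $n$ is $\frac{q^{t+1}+1}{\lambda}-\lfloor\frac q\lambda\rfloor$. If $t$ is odd, the smallest such $i$ is $\frac{q^{t+1}-1}{\lambda}-\lfloor\frac{q-2}{\lambda}\rfloor$.
   Context: For $0\le s\le n-1$, $C_s=\{sq^i\bmod n:i\ge0\}$ is the $q$-cyclotomic coset of $s$ modulo $n$; its least element is its coset leader. *)

From mathcomp Require Import all_boot.
Set Implicit Arguments. Unset Strict Implicit. Unset Printing Implicit Defensive.

Definition cyc_coset (q n s : nat) : nat -> Prop :=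
  fun x => exists i : nat, x = (s * q ^ i) %% n.

Definition coset_leader (q n s : nat) : Prop :=
  s < n /\ (forall x, cyc_coset q n s x -> s <= x).

Definition prime_power (q : nat) : Prop :=
  exists p k : nat, prime p /\ 0 < k /\ q = p ^ k.

Definition least_nonleader (q n d : nat) : Prop :=
  [/\ 0 < d, ~~ (q %| d), ~ coset_leader q n d &
      forall i, 0 < i -> i < d -> ~~ (q %| i) -> coset_leader q n i].

(* Multiplication by lambda maps C_s modulo n onto the coset of lambda s modulo
   N = q^m + 1, so it suffices to study residues of a q^j modulo N, where
   q^m = -1.  If 0 < a <= q^(t+1) - q and q does not divide a, then for v < m the
   residue r of a q^v lies in [a, N - a]: for v <= t there is no reduction, and
   otherwise r q^(m-v) = -a (mod N), which forces r and N - r to be large.  Hence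
   every element of the coset of a, being a q^v or its negative, is at least a.
   If instead q^(t+1) - q < a <= q^(t+1) and t >= 2, then a q^(t+m) = N - a q^t < a.
   The integer d of the theorem is the least one with lambda d > q^(t+1) - q:
   lambda d = q^(t+1) - q + c with 0 < c <= lambda < q. *)

From mathcomp Require Import all_boot zify.
Set Implicit Arguments. Unset Strict Implicit.

Lemma modn_mul_pred x y : 0 < y %% x.+1 -> (y * x) %% x.+1 = x.+1 - y %% x.+1.
Proof.
move=> y_mod_gt0.
have y_mod_lt := ltn_pmod y (ltn0Sn x).
have -> : y * x = (y %/ x.+1 * x + y %% x.+1 - 1) * x.+1 + (x.+1 - y %% x.+1).
  rewrite {1}(divn_eq y x.+1); move: y_mod_gt0 y_mod_lt.
  set Q := y %/ x.+1; case: (y %% x.+1) => // r _ r_lt.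
  by rewrite addnS subn1 /=; nia.
by rewrite modnMDl modn_small //; lia.
Qed.

Lemma expn_mod_succ x c : x ^ c = (if odd c then x else 1) %[mod x.+1].
Proof.
elim: c => [|c IHc] //; rewrite expnS -modnMmr IHc modnMmr /=.
case: (odd c) => /=; last by rewrite muln1.
case: x {IHc} => [|x]; first by rewrite !modn1.
have -> : x.+1 * x.+1 = x * x.+2 + 1 by nia.
by rewrite modnMDl.
Qed.

Lemma coset_leaderMl q n s l : 0 < l ->
  coset_leader q (l * n) (l * s) <-> coset_leader q n s.
Proof.
move=> l_gt0; rewrite /coset_leader ltn_pmul2l //.
split=> -[s_lt leader]; split=> // _ [i ->].
- rewrite -(leq_pmul2l l_gt0) muln_modr mulnA; apply: leader.
  by exists i.
- rewrite -mulnA -muln_modr leq_pmul2l //; apply: leader.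
  by exists i.
Qed.

Section PowerResidues.

Variables q t : nat.
Hypotheses (q_gt1 : 1 < q) (t_gt0 : 0 < t).

Local Notation m := (2 * t + 1).
Local Notation N := (q ^ m).+1.

Let expn_m : q ^ m = q * q ^ t * q ^ t.
Proof. by rewrite -!expnS -expnD; congr (_ ^ _); lia. Qed.

Let q_le_expt : q <= q ^ t.
Proof. by rewrite -{1}(expn1 q) leq_pexp2l //; lia. Qed.

Lemma residue_window a v : 0 < a -> a <= q ^ t.+1 - q -> ~~ (q %| a) -> v < m ->
  a <= (a * q ^ v) %% N <= N - a.
Proof.
move=> a_gt0 a_le q_a v_lt; rewrite expnS in a_le.
have qv_gt0 : 0 < q ^ v by rewrite expn_gt0; lia.
have aqt_le : a * q ^ t <= q * q ^ t * q ^ t - q * q ^ t.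
  by rewrite -mulnBl leq_mul.
have qt_le : q * q ^ t <= q * q ^ t * q ^ t by rewrite leq_pmulr // expn_gt0; lia.
case: (leqP v t) => [v_le | v_gt].
  have aqv_le : a * q ^ v <= a * q ^ t by rewrite leq_mul2l leq_pexp2l ?orbT //; lia.
  have aqv_ge : a <= a * q ^ v by rewrite leq_pmulr.
  by rewrite modn_small expn_m; lia.
set r := (a * q ^ v) %% N; set k := m - v.
have k_gt0 : 0 < k by lia.
have qk_le : q ^ k <= q ^ t by rewrite leq_pexp2l //; lia.
(* r q^(m-v) = a q^m = -a (mod N): neither a small r nor a small N - r allows this. *)
have N_dvd : N %| r * q ^ k + a.
  by rewrite /dvdn /r -modnDml modnMml modnDml -mulnA -expnD subnKC 1?ltnW // -mulnSr modnMl.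
have small_x x : x < a -> x * q ^ k + a < N.
  move=> x_lt; have : x * q ^ k <= (a - 1) * q ^ t by apply: leq_mul; lia.
  by rewrite mulnBl mul1n expn_m; lia.
apply/andP; split; rewrite leqNgt; apply/negP.
  move=> r_lt; have := small_x r r_lt.
  by have := dvdn_leq (leq_trans a_gt0 (leq_addl _ _)) N_dvd; lia.
move=> r_gt.
have r_lt : r < N by apply: ltn_pmod.
have s_lt : N - r < a by lia.
have [c e] := dvdnP N_dvd.
have sq_eq : (N - r) * q ^ k = a.
  rewrite -(modn_small (leq_ltn_trans (leq_addr a _) (small_x _ s_lt))).
  rewrite -(modnMDl c) -e addnAC -mulnDl subnKC 1?ltnW // [N * _]mulnC modnMDl.
  by rewrite modn_small //; lia.
by move: q_a; rewrite -sq_eq dvdn_mull // dvdn_exp.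
Qed.

Lemma coset_leader_small a : 0 < a -> a <= q ^ t.+1 - q -> ~~ (q %| a) ->
  coset_leader q N a.
Proof.
move=> a_gt0 a_le q_a; split.
  have : q ^ t.+1 <= q ^ m by rewrite leq_pexp2l //; lia.
  lia.
move=> _ [j ->]; have m_gt0 : 0 < m by rewrite addn1.
have /andP[res_ge res_le] := residue_window a_gt0 a_le q_a (ltn_pmod j m_gt0).
rewrite (divn_eq j m) [_ * m]mulnC expnD expnM mulnCA mulnC.
rewrite -modnMmr expn_mod_succ modnMmr.
by case: odd; [rewrite modn_mul_pred; lia | rewrite muln1].
Qed.

Lemma not_coset_leader_large a : 1 < t -> q ^ t.+1 - q < a <= q ^ t.+1 ->
  ~ coset_leader q N a.
Proof.
move=> t_gt1 /andP[a_gt a_le] [_ leader].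
rewrite expnS in a_gt a_le.
have q_lt_expt : q < q ^ t by rewrite -{1}(expn1 q) ltn_exp2l.
have aqt_lt : a * q ^ t < N by rewrite ltnS expn_m leq_mul.
have := leader _ (ex_intro _ (t + m) erefl).
rewrite expnD mulnA modn_mul_pred (modn_small aqt_lt); last by rewrite muln_gt0 expn_gt0; lia.
rewrite expn_m; nia.
Qed.

End PowerResidues.

Lemma least_nonleader_threshold q t l n d c : 1 < q -> 1 < t -> coprime q l ->
  l * n = q ^ (2 * t + 1) + 1 -> l * d = q ^ t.+1 - q + c -> 0 < c <= l -> c < q ->
  least_nonleader q n d.
Proof.
move=> q_gt1 t_gt1 q_l_coprime ln ld /andP[c_gt0 c_le] c_lt.
have l_gt0 : 0 < l by lia.
have q_le : q <= q ^ t.+1 by rewrite -{1}(expn1 q) leq_pexp2l //; lia.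
have leaderE i : coset_leader q n i <-> coset_leader q (q ^ (2 * t + 1)).+1 (l * i).
  by rewrite -addn1 -ln coset_leaderMl.
split.
- by rewrite -(ltn_pmul2l l_gt0) ld; lia.
- apply/negP => /(dvdn_mull l); rewrite ld dvdn_addr; last first.
    by rewrite dvdn_sub ?dvdn_exp.
  by move/dvdn_leq; lia.
- by rewrite leaderE; apply: not_coset_leader_large; lia.
move=> i i_gt0 i_lt q_i; rewrite leaderE.
have : l * i <= l * (d - 1) by rewrite leq_mul2l; lia.
rewrite mulnBr muln1 => li_le.
apply: (coset_leader_small q_gt1); [lia | rewrite muln_gt0; lia | lia | by rewrite Gauss_dvdr].
Qed.

Lemma dvdnS_expn_odd x e : odd e -> x.+1 %| x ^ e + 1.
Proof.
by move=> e_odd; rewrite /dvdn -modnDml expn_mod_succ e_odd modnDml addn1 modnn.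
Qed.

Lemma dvdnS_expn_even x e : ~~ odd e -> x.+1 %| x ^ e - 1.
Proof.
move=> e_even; case: x => [|x]; first exact: dvd1n.
by rewrite -eqn_mod_dvd ?expn_gt0 // expn_mod_succ (negbTE e_even).
Qed.

Lemma mulnBdiv l a b : l %| a -> b <= a -> l * (a %/ l - b %/ l) = a - b + b %% l.
Proof.
move=> l_dvd b_le; rewrite mulnBr !(mulnC l) divnK //.
by have := divn_eq b l; lia.
Qed.

Theorem corollary1 (q lambda t : nat) :
  prime_power q -> odd q ->
  lambda %| q.+1 -> 2 <= lambda -> lambda < q.+1 ->
  5 <= 2 * t + 1 ->
  let m := 2 * t + 1 in
  let n := (q ^ m + 1) %/ lambda in
  (~~ odd t -> least_nonleader q n ((q ^ t.+1 + 1) %/ lambda - q %/ lambda)) /\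
  (odd t -> least_nonleader q n ((q ^ t.+1 - 1) %/ lambda - (q - 2) %/ lambda)).
Proof.
move=> _ _ l_dvd l_ge2 l_lt t_ge m n.
have q_gt1 : 1 < q by lia.
have t_gt1 : 1 < t by lia.
have l_lt_q : lambda < q.
  suff : lambda != q by lia.
  by apply: contraTneq l_dvd => ->; rewrite -addn1 dvdn_addr // dvdn1; lia.
have q_l_coprime : coprime q lambda := coprime_dvdr l_dvd (coprimenS q).
have q_le : q <= q ^ t.+1 by rewrite -{1}(expn1 q) leq_pexp2l //; lia.
have ln : lambda * n = q ^ m + 1.
  by rewrite mulnC divnK // (dvdn_trans l_dvd) // dvdnS_expn_odd // /m addn1 /= mul2n odd_double.
have least_quotient A b : lambda %| A -> A - b = (q ^ t.+1 - q).+1 ->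
    least_nonleader q n (A %/ lambda - b %/ lambda).
  move=> l_dvd_A A_sub_b; have b_mod_lt := ltn_pmod b (ltnW l_ge2).
  apply: (least_nonleader_threshold (c := 1 + b %% lambda) q_gt1 t_gt1 q_l_coprime ln); try lia.
  by rewrite mulnBdiv //; lia.
split=> t_parity; apply: least_quotient; try lia.
- by rewrite (dvdn_trans l_dvd) // dvdnS_expn_odd.
- by rewrite (dvdn_trans l_dvd) // dvdnS_expn_even //= negbK.
Qed.
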